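(* Let $q$ be a power of $2$, let $b\in\mathbb{F}_q$ with $b\ne0$, and let $n\ge2$ be an integer. Let $r\ge0$ be such that $2^r$ divides $n+1$ but $2^{r+1}$ does not, and let $m\ge0$ be defined by $n+1=2^r(m+1)$. Assume $r\ge1$. If $q>m/2+1$, then there exists $a\in\mathbb{F}_q$ such that $\hat C_n(a,b)$ is LCD.
   Context: For $a,b\in\mathbb{F}_q$ and $n\ge 2$, $\hat T_n(a,b)$ denotes the $n\times n$ symmetric tridiagonal Toeplitz matrix over $\mathbb{F}_q$ with all diagonal entries equal to $a$, all entries on the first super- and sub-diagonals equal to $b$, and all other entries $0$. $\hat C_n(a,b)$ is the $[2n,n]$ linear code over $\mathbb{F}_q$ with generator matrix $[I_n\mid \hat T_n(a,b)]$. A linear code $C$ is LCD if $C\cap C^\perp=\{0\}$ (Euclidean dual). *)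

From mathcomp Require Import all_boot all_order all_algebra all_field.
Set Implicit Arguments. Unset Strict Implicit. Unset Printing Implicit Defensive.
Import GRing.Theory.
Local Open Scope ring_scope.

Definition hatT (F : fieldType) (n : nat) (a b : F) : 'M[F]_n :=
  \matrix_(i < n, j < n)
    if i == j then a
    else if ((i.+1 == j)%N || (j.+1 == i)%N) then b else 0.

(* Generator matrix [I_n | \hat T_n(a,b)] of the [2n, n] code \hat C_n(a,b). *)
Definition hatG (F : fieldType) (n : nat) (a b : F) : 'M[F]_(n, n + n) :=
  row_mx 1%:M (hatT n a b).

Definition in_code (F : fieldType) (k N : nat) (G : 'M[F]_(k, N)) (x : 'rV[F]_N) : Prop :=
  (x <= G)%MS.

Definition in_dual (F : fieldType) (k N : nat) (G : 'M[F]_(k, N)) (x : 'rV[F]_N) : Prop :=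
  forall c : 'rV[F]_N, in_code G c -> c *m x^T = 0.

Definition is_LCD (F : fieldType) (k N : nat) (G : 'M[F]_(k, N)) : Prop :=
  forall x : 'rV[F]_N, in_code G x -> in_dual G x -> x = 0.

From mathcomp Require Import all_boot all_order all_algebra all_field.
From mathcomp Require Import zify ring.
Set Implicit Arguments. Unset Strict Implicit. Unset Printing Implicit Defensive.
Import GRing.Theory.
Local Open Scope ring_scope.

(* A code with generator matrix G is LCD as soon as the Gram matrix G G^T is
   nonsingular.  For G = [I | T] with T = \hat T_n(a,b) symmetric this Gram
   matrix is I + T^2, which in characteristic 2 equals (I + T)^2 with
   I + T = \hat T_n(a+1,b).  A kernel vector of \hat T_n(c,b) satisfies the
   three-term recurrence v_{k+1} = (c/b) v_k + v_{k-1}, so it is a multiple of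
   the Fibonacci polynomials W_k (W_0 = 0, W_1 = 1, W_{k+2} = X W_{k+1} + W_k)
   evaluated at c/b, and vanishes whenever W_{n+1}(c/b) != 0.
   In characteristic 2, W_{2k} = X W_k^2 and W_{2k+1} = (W_{k+1} + W_k)^2, so
   W_{2^r (m+1)}(y) != 0 as soon as y != 0 and W_{m+1}(y) != 0; for m + 1 odd
   the latter asks y to avoid the roots of a polynomial of degree m/2 < q - 1,
   which a counting argument provides.  Taking a = y b - 1 concludes. *)

Section Fibonacci.
Variable R : comNzRingType.

Fixpoint fibp (k : nat) : {poly R} :=
  match k with
  | 0 => 0
  | k1.+1 => if k1 is k2.+1 then fibp k1 * 'X + fibp k2 else 1
  end.

Lemma fibpSS k : fibp k.+2 = fibp k.+1 * 'X + fibp k.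
Proof. by []. Qed.

Lemma fibp_add j k : fibp (j + k).+1 = fibp j.+1 * fibp k.+1 + fibp j * fibp k.
Proof.
suff [] : fibp (j + k).+1 = fibp j.+1 * fibp k.+1 + fibp j * fibp k /\
          fibp (j.+1 + k).+1 = fibp j.+2 * fibp k.+1 + fibp j.+1 * fibp k by [].
elim: j => [|j [IHj IHjS]].
  split; first by rewrite /= mul1r mul0r addr0.
  by case: k => [|k]; rewrite add1n fibpSS /=; ring.
by split=> //; rewrite addSn fibpSS -addSn IHjS addSn IHj !fibpSS; ring.
Qed.

Lemma size_fibp k : size (fibp k) = k.
Proof.
suff [] : size (fibp k) = k /\ size (fibp k.+1) = k.+1 by [].
elim: k => [|k [IHk IHkS]]; first by rewrite /= size_poly0 size_poly1.
have fibpS_neq0 : fibp k.+1 != 0 by rewrite -size_poly_eq0 IHkS.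
by split=> //; rewrite fibpSS size_polyDl size_mulX ?IHkS ?IHk.
Qed.

Hypothesis pchar2 : 2 \in [pchar R].

Let pchar2_poly : 2 \in [pchar {poly R}].
Proof. exact: (rmorph_pchar (@polyC R)). Qed.

(* In characteristic 2 the cross terms of the addition formula cancel. *)
Lemma fibp_double k : fibp (k + k) = fibp k ^+ 2 * 'X.
Proof.
case: k => [|k]; first by rewrite /= expr0n mul0r.
rewrite addSn fibp_add fibpSS.
have -> : fibp k.+1 * (fibp k.+1 * 'X + fibp k) + fibp k * fibp k.+1
  = fibp k.+1 ^+ 2 * 'X + (fibp k.+1 * fibp k + fibp k.+1 * fibp k) by ring.
by rewrite addrr_pchar2 // addr0.
Qed.

Lemma fibp_double_succ k : fibp (k + k).+1 = (fibp k.+1 + fibp k) ^+ 2.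
Proof.
rewrite fibp_add.
have -> : (fibp k.+1 + fibp k) ^+ 2 = fibp k.+1 * fibp k.+1 + fibp k * fibp k
  + (fibp k.+1 * fibp k + fibp k.+1 * fibp k) by ring.
by rewrite addrr_pchar2 // addr0.
Qed.

End Fibonacci.

Lemma fibp_pow2_neq0 (R : idomainType) (r N : nat) (y : R) :
  2 \in [pchar R] -> y != 0 -> (fibp R N).[y] != 0 ->
  (fibp R (2 ^ r * N)).[y] != 0.
Proof.
move=> pchar2 y_neq0 fibpN_neq0; elim: r => [|r IHr]; first by rewrite mul1n.
rewrite expnS -mulnA mul2n -addnn fibp_double // hornerMX horner_exp.
by rewrite mulf_neq0 // expf_neq0.
Qed.

Lemma exists_nonzero_nonroot (F : finFieldType) (P : {poly F}) :
  P != 0 -> (size P < #|F|)%N -> exists2 y : F, y != 0 & P.[y] != 0.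
Proof.
move=> P_neq0 small_P; apply/exists_inP; apply: contraLR small_P.
rewrite negb_exists_in => /forall_inP all_roots; rewrite -leqNgt.
have card_gt0 : (0 < #|F|)%N by rewrite (cardD1 0).
rewrite -(prednK card_gt0) -(cardC1 (0 : F)) cardE.
apply: max_poly_roots P_neq0 _ (enum_uniq _).
by apply/allP => y; rewrite mem_enum !inE => /all_roots; rewrite negbK.
Qed.

Lemma fibp_odd_nonroot (F : finFieldType) (k : nat) :
  2 \in [pchar F] -> (k.+1 < #|F|)%N ->
  exists2 y : F, y != 0 & (fibp F (k + k).+1).[y] != 0.
Proof.
move=> pchar2 small_k.
have size_root : size (fibp F k.+1 + fibp F k) = k.+1.
  by rewrite size_polyDl !size_fibp.
have root_neq0 : fibp F k.+1 + fibp F k != 0 by rewrite -size_poly_eq0 size_root.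
have [|y y_neq0 nonroot] := exists_nonzero_nonroot root_neq0; first by rewrite size_root.
by exists y; rewrite // fibp_double_succ // horner_exp expf_neq0.
Qed.

(* If G G^T is injective then the row space of G meets its dual trivially:
   a codeword y G orthogonal to all rows of G gives G G^T y^T = 0. *)
Lemma lcd_of_gram_injective (F : fieldType) (k N : nat) (G : 'M[F]_(k, N)) :
  (forall v : 'cV_k, G *m G^T *m v = 0 -> v = 0) -> is_LCD G.
Proof.
move=> gram_inj x /submxP [y ->] x_dual.
have G_orth : G *m (y *m G)^T = 0.
  by apply/row_matrixP => i; rewrite row_mul row0; apply/x_dual/row_sub.
have : y^T = 0 by apply: gram_inj; rewrite -mulmxA -trmx_mul.
by move/(congr1 trmx); rewrite trmxK trmx0 => ->; rewrite mul0mx.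
Qed.

Section Tridiagonal.
Variable F : fieldType.

Lemma hatT_tr n (a b : F) : (hatT n a b)^T = hatT n a b.
Proof. by apply/matrixP => i j; rewrite !mxE eq_sym orbC. Qed.

Lemma hatT_addI n (a b : F) : 1%:M + hatT n a b = hatT n (a + 1) b.
Proof.
by apply/matrixP => i j; rewrite !mxE; case: eqP => _; rewrite ?add0r // addrC.
Qed.

Lemma hatG_gram n (a b : F) :
  hatG n a b *m (hatG n a b)^T = 1%:M + hatT n a b *m hatT n a b.
Proof. by rewrite /hatG tr_row_mx mul_row_col hatT_tr trmx1 mulmx1. Qed.

Lemma hatG_gram_pchar2 n (a b : F) : 2 \in [pchar F] ->
  hatG n a b *m (hatG n a b)^T = hatT n (a + 1) b *m hatT n (a + 1) b.
Proof.
move=> pchar2; have hatT_double : hatT n a b + hatT n a b = 0.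
  by apply/matrixP => i j; rewrite !mxE addrr_pchar2.
rewrite hatG_gram -hatT_addI mulmxDl !mulmxDr !mul1mx mulmx1.
by rewrite -addrA (addrA (hatT n a b)) hatT_double add0r.
Qed.

(* The coordinates of v : 'cV_n indexed from 1 to n, padded with zeros at
   0 and n + 1, so that every row of \hat T_n v reads uniformly. *)
Definition pad n (v : 'cV[F]_n) (k : nat) : F := \sum_(j < n | j.+1 == k) v j 0.

Lemma pad0 n (v : 'cV[F]_n) : pad v 0 = 0.
Proof. by rewrite /pad big_pred0. Qed.

Lemma pad_last n (v : 'cV[F]_n) : pad v n.+1 = 0.
Proof. by rewrite /pad big_pred0 // => j; rewrite eqSS ltn_eqF. Qed.

Lemma padS n (v : 'cV[F]_n) (j : 'I_n) : pad v j.+1 = v j 0.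
Proof. by rewrite /pad (big_pred1 j) // => i; rewrite eqSS. Qed.

Lemma hatT_mul_pad n (c b : F) (v : 'cV[F]_n) (i : 'I_n) :
  (hatT n c b *m v) i 0 = b * pad v i + c * pad v i.+1 + b * pad v i.+2.
Proof.
rewrite mxE /pad !mulr_sumr !(big_mkcond (fun j : 'I_n => _ == _)) -!big_split.
apply: eq_bigr => j _; rewrite mxE !eqSS -val_eqE /=.
case: (ltngtP i j) => [lt_ij|lt_ji|<-].
- rewrite (gtn_eqF (ltnW lt_ij : (i < j.+1)%N)) orbF eq_sym addr0 add0r.
  by case: (_ == _); rewrite ?mul0r.
- rewrite (ltn_eqF (ltnW lt_ji : (j < i.+1)%N)) (gtn_eqF (ltnW lt_ji : (j < i.+1)%N)) /= !addr0.
  by case: (_ == _); rewrite ?mul0r.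
- by rewrite (gtn_eqF (ltnSn i)) (ltn_eqF (ltnSn i)) addr0 add0r.
Qed.

(* \hat T_n(c,b) is nonsingular when W_{n+1}(c/b) != 0: a kernel vector
   follows the Fibonacci recurrence at c/b from pad 0 = 0, so
   pad k = pad 1 * W_k(c/b), and pad (n+1) = 0 forces pad 1 = 0. *)
Lemma hatT_kernel n (c b : F) (v : 'cV[F]_n) :
  2 \in [pchar F] -> b != 0 -> (fibp F n.+1).[c / b] != 0 ->
  hatT n c b *m v = 0 -> v = 0.
Proof.
move=> pchar2 b_neq0 fibp_neq0 Tv0; set y := c / b.
have recur k : (k < n)%N -> pad v k.+2 = y * pad v k.+1 + pad v k.
  move=> lt_kn; have := congr1 (fun M : 'cV[F]_n => M (Ordinal lt_kn) 0) Tv0.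
  rewrite /= hatT_mul_pad mxE => /eqP.
  rewrite addrC addr_eq0 oppr_pchar2 // => /eqP b_pad.
  by apply: (mulfI b_neq0); rewrite b_pad /y; field.
have pad_fibp k : (k <= n)%N ->
    pad v k = pad v 1 * (fibp F k).[y] /\ pad v k.+1 = pad v 1 * (fibp F k.+1).[y].
  elim: k => [|k IHk] le_kn; first by rewrite pad0 /= horner0 hornerC mulr0 mulr1.
  have [pad_k pad_kS] := IHk (ltnW le_kn); split=> //.
  by rewrite recur // pad_kS pad_k fibpSS hornerD hornerMX; ring.
have pad1_eq0 : pad v 1 = 0.
  have := (pad_fibp n (leqnn n)).2; rewrite pad_last => /esym/eqP.
  by rewrite mulf_eq0 (negbTE fibp_neq0) orbF => /eqP.
apply/matrixP => i j; rewrite ord1 mxE -padS.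
by rewrite (pad_fibp i.+1 (ltn_ord i)).1 pad1_eq0 mul0r.
Qed.

End Tridiagonal.

Theorem corollary2p5 (F : finFieldType) (n r m : nat) (b : F) :
  (exists k : nat, #|F| = (2 ^ k)%N) ->
  b != 0 ->
  (2 <= n)%N ->
  (2 ^ r %| n.+1)%N ->
  ~~ (2 ^ r.+1 %| n.+1)%N ->
  n.+1 = (2 ^ r * m.+1)%N ->
  (1 <= r)%N ->
  (m.+2 < 2 * #|F|)%N ->
  exists a : F, is_LCD (hatG n a b).
Proof.
move=> [k cardF] b_neq0 _ _ not_dvd n_split _ small_m.
have pchar2 : 2 \in [pchar F] := card_finPcharP cardF (isT : prime 2).
have m_even : m = (m./2 + m./2)%N.
  move: not_dvd; rewrite n_split expnSr dvdn_pmul2l ?expn_gt0 // dvdn2 /=.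
  by rewrite negbK addnn => /even_halfK.
have [y y_neq0 fibp_m] : exists2 y : F, y != 0 & (fibp F m.+1).[y] != 0.
  by rewrite m_even; apply: fibp_odd_nonroot; lia.
have fibp_n : (fibp F n.+1).[y] != 0 by rewrite n_split fibp_pow2_neq0.
exists (y * b - 1); apply: lcd_of_gram_injective => v.
rewrite hatG_gram_pchar2 // subrK -mulmxA.
have hatT_inj (w : 'cV_n) : hatT n (y * b) b *m w = 0 -> w = 0.
  by apply: (hatT_kernel pchar2 b_neq0); rewrite mulfK.
by move=> /hatT_inj /hatT_inj.
Qed.
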